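(* In the setting of the previous definitions, let $u^+(t,x,z)=\lim_{n\to\infty}u^n(t,x,z)$, $u^-(t,x,z)=\lim_{n\to\infty}u_n(t,x,z)$ and $\Psi_0^\pm(x,z)=u^\pm(0,x,z)$. Then for each $z\in\mathbb R$, $u^\pm(t,x,z)=u(t,x;\Psi_0^\pm(\cdot,z),z)$ for all $t,x\in\mathbb R$; in particular $u^\pm(\cdot,\cdot,z)$ are entire solutions of the space-continuous equation.
   Context: Periodic lattice setting: $d(t,j)$ bounded with $\inf d>0$, $f(t,j,u)$ satisfying (H0) (locally Hölder in $t$, Lipschitz in $u$, $C^1$ in $u$ for $u\ge0$, $f(t,j,u)=f(t,j,0)$ for $u\le0$, $f<0$ for $u\ge M_0$, $f_u<0$ for $u\ge0$, $\liminf_{t-s\to\infty}\frac1{t-s}\int_s^t\inf_jf(\tau,j,0)d\tau>0$), with $d(t+T,j)=d(t,j+J)=d(t,j)$, $f(t+T,j,u)=f(t,j+J,u)=f(t,j,u)$. $u^+_j(t)$ is the unique strictly positive entire solution of the lattice equation. $\lambda(\mu),\psi^\mu(t,j)>0$ ($T$-periodic in $t$, $J$-periodic in $j$, normalized) are such that $e^{\lambda(\mu)t}\psi^\mu$ solves $\dot v_j=d(t,j-1)(e^\mu v_{j-1}-v_j)+d(t,j+1)(e^{-\mu}v_{j+1}-v_j)+f(t,j,0)v_j$; $c^*=\min_{\mu>0}\lambda(\mu)/\mu$ attained at $\mu^*$; fix $c>c^*$, $0<\mu<\mu'<\min\{2\mu,\mu^*\}$ with $c=\lambda(\mu)/\mu>\lambda(\mu')/\mu'>c^*$.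 Extend to $x\in\mathbb R$ piecewise constantly on $[j,j+1)$. Space-continuous equation: $\partial_tu(t,x)=d(t,x+z+1)(u(t,x+1)-u(t,x))+d(t,x+z-1)(u(t,x-1)-u(t,x))+u(t,x)f(t,x+z,u(t,x))$, solution $u(t,x;u_0,z)$ with $u(0,\cdot;u_0,z)=u_0$. With $0<d\le2$, $d_1/d$ large, $b>0$ small: $\underline v(t,x;z)=de^{-\mu(x-ct)}\psi^\mu(t,x+z)-d_1e^{-\mu'(x-ct)}\psi^{\mu'}(t,x+z)$, $\bar v$ the same with $+d_1$; $\underline u(t,x;z)=\max\{b\psi^0(t,x+z),\underline v(t,x;z)\}$ for $x\le M+ct$ and $\underline v$ otherwise (with $M$ such that $b\psi^0\le\underline v$ for $x-ct\in[N,M]$); $\bar u(t,x;z)=\min\{\bar v(t,x;z),u^+_{x+z}(t)\}$. $u^n(t,x,z)=u(t+nT,x+cnT;\bar u(0,\cdot;z-cnT),z-cnT)$ and $u_n(t,x,z)=u(t+nT,x+cnT;\underline u(0,\cdot;z-cnT),z-cnT)$ (defined for $t+nT\ge0$); these are eventually monotone in $n$ (non-increasing and non-decreasing, respectively), so the limits exist. *)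

From Stdlib Require Import Reals Lra Lia ZArith.
Open Scope R_scope.

(* floor x, as an integer: up x is the unique integer with x < up x <= x+1 *)
Definition flr (x : R) : Z := (up x - 1)%Z.

(* piecewise-constant extension to x in R of a lattice function: value on [j,j+1) is g t j *)
Definition ext (g : R -> Z -> R) (t x : R) : R := g t (flr x).

Definition lat_rhs (d : R -> Z -> R) (f : R -> Z -> R -> R) (t : R) (u : Z -> R) (j : Z) : R :=
  d t (j - 1)%Z * (u (j - 1)%Z - u j) + d t (j + 1)%Z * (u (j + 1)%Z - u j)
  + u j * f t j (u j).

(* right-hand side of the linearized (shifted by e^{mu}) lattice equation *)
Definition lin_rhs (d : R -> Z -> R) (f : R -> Z -> R -> R) (mu t : R) (v : Z -> R) (j : Z) : R :=
  d t (j - 1)%Z * (exp mu * v (j - 1)%Z - v j)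
  + d t (j + 1)%Z * (exp (- mu) * v (j + 1)%Z - v j)
  + f t j 0 * v j.

Definition sc_rhs (d : R -> Z -> R) (f : R -> Z -> R -> R) (z t : R) (w : R -> R) (x : R) : R :=
  ext d t (x + z + 1) * (w (x + 1) - w x) + ext d t (x + z - 1) * (w (x - 1) - w x)
  + w x * f t (flr (x + z)) (w x).

Definition hyp_d (T : R) (J : Z) (d : R -> Z -> R) : Prop :=
  (exists B, forall t j, d t j <= B) /\
  (exists delta, 0 < delta /\ forall t j, delta <= d t j) /\
  (forall j, continuity (fun t => d t j)) /\
  (forall t j, d (t + T) j = d t j) /\
  (forall t j, d t (j + J)%Z = d t j).

Definition hyp_H0 (T : R) (J : Z) (M0 : R) (f : R -> Z -> R -> R) (fu : R -> Z -> R -> R) : Prop :=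
  (exists alpha, 0 < alpha <= 1 /\ forall R0, exists C, forall t s j u,
       Rabs u <= R0 -> Rabs (t - s) <= 1 ->
       Rabs (f t j u - f s j u) <= C * Rpower (Rabs (t - s)) alpha) /\
  (exists L, forall t j u v, Rabs (f t j u - f t j v) <= L * Rabs (u - v)) /\
  (forall t j u, 0 < u -> derivable_pt_lim (fun v => f t j v) u (fu t j u)) /\
  (forall t j u, 0 <= u -> forall eps, 0 < eps -> exists delta, 0 < delta /\
       forall v, 0 <= v -> Rabs (v - u) < delta -> Rabs (fu t j v - fu t j u) < eps) /\
  (forall t j u, u <= 0 -> f t j u = f t j 0) /\
  (0 < M0 /\ forall t j u, M0 <= u -> f t j u < 0) /\
  (forall t j u, 0 <= u -> fu t j u < 0) /\
  (* liminf_{t-s -> oo} (1/(t-s)) int_s^t inf_j f(tau,j,0) dtau > 0 *)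
  (exists g : R -> R,
     (forall tau j, g tau <= f tau j 0) /\
     (forall tau eps, 0 < eps -> exists j, f tau j 0 < g tau + eps) /\
     exists eps Lt, 0 < eps /\ forall s t, Lt <= t - s ->
       exists pr : Riemann_integrable g s t, eps <= RiemannInt pr / (t - s)) /\
  (forall t j u, f (t + T) j u = f t j u) /\
  (forall t j u, f t (j + J)%Z u = f t j u).

(* u^+ is the unique strictly positive (bounded, with positive infimum) entire solution *)
Definition is_uplus (d : R -> Z -> R) (f : R -> Z -> R -> R) (up_ : R -> Z -> R) : Prop :=
  (forall t j, derivable_pt_lim (fun s => up_ s j) t (lat_rhs d f t (up_ t) j)) /\
  (exists a B, 0 < a /\ forall t j, a <= up_ t j <= B).

(* lam mu, psi mu: principal eigenpair; e^{lam t} psi solves the linear equation *)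
Definition is_eigen (T : R) (J : Z) (d : R -> Z -> R) (f : R -> Z -> R -> R)
    (lam : R -> R) (psi : R -> R -> Z -> R) : Prop :=
  forall mu,
    (forall t j, 0 < psi mu t j) /\
    (forall t j, psi mu (t + T) j = psi mu t j) /\
    (forall t j, psi mu t (j + J)%Z = psi mu t j) /\
    (forall t j, derivable_pt_lim (fun s => exp (lam mu * s) * psi mu s j) t
                   (lin_rhs d f mu t (fun k => exp (lam mu * t) * psi mu t k) j)).

(* U t x u0 z = u(t,x;u0,z): solution of the space-continuous equation for t >= 0,
   for bounded initial data u0 (locally bounded in time, continuous at t = 0) *)
Definition is_sol_map (d : R -> Z -> R) (f : R -> Z -> R -> R)
    (U : R -> R -> (R -> R) -> R -> R) : Prop :=
  forall (u0 : R -> R) (z : R), (exists B, forall x, Rabs (u0 x) <= B) ->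
    (forall x, U 0 x u0 z = u0 x) /\
    (forall t x, 0 < t ->
       derivable_pt_lim (fun s => U s x u0 z) t (sc_rhs d f z t (fun y => U t y u0 z) x)) /\
    (forall x eps, 0 < eps -> exists delta, 0 < delta /\
       forall s, 0 <= s < delta -> Rabs (U s x u0 z - U 0 x u0 z) < eps) /\
    (forall tau, exists B, forall t x, 0 <= t <= tau -> Rabs (U t x u0 z) <= B).

(* sub/super-solution building blocks *)
Definition vlow (psi : R -> R -> Z -> R) (c mu mu' dd d1 t x z : R) : R :=
  dd * exp (- mu * (x - c * t)) * ext (psi mu) t (x + z)
  - d1 * exp (- mu' * (x - c * t)) * ext (psi mu') t (x + z).

Definition vup (psi : R -> R -> Z -> R) (c mu mu' dd d1 t x z : R) : R :=
  dd * exp (- mu * (x - c * t)) * ext (psi mu) t (x + z)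
  + d1 * exp (- mu' * (x - c * t)) * ext (psi mu') t (x + z).

Definition ulow (psi : R -> R -> Z -> R) (c mu mu' dd d1 b M t x z : R) : R :=
  if Rle_dec x (M + c * t)
  then Rmax (b * ext (psi 0) t (x + z)) (vlow psi c mu mu' dd d1 t x z)
  else vlow psi c mu mu' dd d1 t x z.

Definition uupper (psi : R -> R -> Z -> R) (up_ : R -> Z -> R) (c mu mu' dd d1 t x z : R) : R :=
  Rmin (vup psi c mu mu' dd d1 t x z) (ext up_ t (x + z)).

Definition u_sup (U : R -> R -> (R -> R) -> R -> R) (psi : R -> R -> Z -> R) (up_ : R -> Z -> R)
    (T c mu mu' dd d1 : R) (n : nat) (t x z : R) : R :=
  U (t + INR n * T) (x + c * INR n * T)
    (fun y => uupper psi up_ c mu mu' dd d1 0 y (z - c * INR n * T)) (z - c * INR n * T).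

Definition u_sub (U : R -> R -> (R -> R) -> R -> R) (psi : R -> R -> Z -> R)
    (T c mu mu' dd d1 b M : R) (n : nat) (t x z : R) : R :=
  U (t + INR n * T) (x + c * INR n * T)
    (fun y => ulow psi c mu mu' dd d1 b M 0 y (z - c * INR n * T)) (z - c * INR n * T).

From Stdlib Require Import Reals Lra Lia ZArith.
Open Scope R_scope.

(* Fix [z] and write [G_n(t, x)] for the n-th translate.  The initial
   data of all translates lie in a fixed interval [0, K] with [K >= M0], so by
   the comparison principle every [G_n] stays in [0, K].  On such states the
   right-hand side is bounded, so the [G_n] are uniformly Lipschitz in time,
   and it is continuous in time uniformly in the state (continuity of [d],
   Hoelder continuity of [f]).  Hence the time derivatives of the [G_n] are
   equicontinuous and converge pointwise; the limit [V] is therefore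
   differentiable and solves the equation at every time.  Finally uniqueness
   for the Cauchy problem identifies [V] with the solution issued from
   [V(0, .)]. *)

Lemma Rabs_le_bounds (a b : R) : Rabs a <= b -> - b <= a <= b.
Proof. unfold Rabs; destruct (Rcase_abs a); intros; lra. Qed.

(* Right continuity of [g] at [a]: the solutions of the Cauchy problem are only
   known to be right-continuous at the initial time. *)
Definition rcont (g : R -> R) (a : R) : Prop :=
  forall eps, 0 < eps -> exists del, 0 < del /\
    forall s, a <= s < a + del -> Rabs (g s - g a) < eps.

Lemma continuity_pt_eps (g : R -> R) (a : R) : continuity_pt g a ->
  forall eps, 0 < eps -> exists del, 0 < del /\
    forall s, Rabs (s - a) < del -> Rabs (g s - g a) < eps.
Proof.
  intros Hc eps Heps.
  destruct (Hc eps Heps) as [del [Hdel Hx]].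
  exists del; split; [lra|]. intros s Hs.
  destruct (Req_dec s a) as [->|Hne].
  - unfold Rminus; rewrite Rplus_opp_r, Rabs_R0; lra.
  - apply (Hx s). split; [split; [exact I| auto] | exact Hs].
Qed.

Lemma derivable_continuity_eps (g : R -> R) (a l : R) : derivable_pt_lim g a l ->
  forall eps, 0 < eps -> exists del, 0 < del /\
    forall s, Rabs (s - a) < del -> Rabs (g s - g a) < eps.
Proof.
  intros H. apply continuity_pt_eps, derivable_continuous_pt. exists l. exact H.
Qed.

Lemma derivable_rcont (g : R -> R) (a l : R) : derivable_pt_lim g a l -> rcont g a.
Proof.
  intros H eps Heps.
  destruct (derivable_continuity_eps g a l H eps Heps) as [del [Hd Hx]].
  exists del; split; auto. intros s Hs. apply Hx. rewrite Rabs_right; lra.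
Qed.

Lemma last_nonpositive_point (g g' : R -> R) (a b : R) : a <= b ->
  rcont g a -> (forall s, a < s <= b -> derivable_pt_lim g s (g' s)) -> g a <= 0 ->
  exists c, a <= c <= b /\ g c <= 0 /\ rcont g c /\ forall s, c < s <= b -> 0 < g s.
Proof.
  intros Hab Hrc Hder Ha.
  set (E := fun s => a <= s <= b /\ g s <= 0).
  assert (HbE : bound E) by (exists b; intros s [Hs _]; lra).
  assert (HnE : exists s, E s) by (exists a; split; [lra|exact Ha]).
  destruct (completeness E HbE HnE) as [c [Hub Hlub]].
  assert (Hac : a <= c) by (apply Hub; split; [lra|exact Ha]).
  assert (Hcb : c <= b) by (apply Hlub; intros s [Hs _]; lra).
  assert (Hgc : g c <= 0).
  { destruct (Req_dec c a) as [->|Hne]; [exact Ha|].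
    destruct (Rle_lt_dec (g c) 0) as [Hle|Hgt]; [exact Hle|exfalso].
    destruct (derivable_continuity_eps g c (g' c) (Hder c ltac:(lra)) (g c) Hgt)
      as [del [Hdel Hx]].
    (* [g] is positive on a left neighbourhood of [c], which contradicts
       [c] being the least upper bound of [E]. *)
    assert (Hm : 0 < Rmin del (c - a) <= del) by (split; [apply Rmin_glb_lt|apply Rmin_l]; lra).
    assert (c <= c - Rmin del (c - a) / 2); [|lra].
    apply Hlub. intros s [Hs Hgs].
    destruct (Rle_lt_dec s (c - Rmin del (c - a) / 2)) as [Hl|Hl]; [exact Hl|exfalso].
    assert (s <= c) by (apply Hub; split; auto).
    assert (Hsc : Rabs (s - c) < del) by (rewrite Rabs_left1; lra).
    destruct (Rabs_def2 _ _ (Hx s Hsc)). lra. }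
  exists c. split; [lra|]. split; [exact Hgc|]. split.
  - destruct (Req_dec c a) as [->|Hne]; [exact Hrc|].
    apply (derivable_rcont g c (g' c)). apply Hder; lra.
  - intros s Hs. destruct (Rle_lt_dec (g s) 0) as [Hl|Hl]; [|exact Hl].
    assert (s <= c) by (apply Hub; split; [lra|exact Hl]). lra.
Qed.

Lemma growth_while_positive (g g' : R -> R) (a b A : R) : a < b -> 0 <= A ->
  rcont g a -> (forall s, a < s <= b -> derivable_pt_lim g s (g' s)) -> g a <= 0 ->
  (forall s, a < s <= b -> 0 < g s -> g' s <= A) ->
  g b <= A * (b - a).
Proof.
  intros Hab HA Hrc Hder Ha Hpos.
  destruct (Rle_lt_dec (g b) (A * (b - a))) as [H|H]; [exact H|exfalso].
  destruct (last_nonpositive_point g g' a b ltac:(lra) Hrc Hder Ha)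
    as [c [Hc [Hgc [Hrcc Hafter]]]].
  assert (Hcb : c < b) by (destruct (Req_dec c b) as [->|]; [nra|lra]).
  destruct (Hrcc (g b - A * (b - a)) ltac:(lra)) as [del [Hdel Hx]].
  set (c' := c + Rmin del (b - c) / 2).
  assert (Hm : 0 < Rmin del (b - c) /\ Rmin del (b - c) <= del /\ Rmin del (b - c) <= b - c)
    by (split; [apply Rmin_glb_lt|split; [apply Rmin_l|apply Rmin_r]]; lra).
  assert (Hgc' : Rabs (g c' - g c) < g b - A * (b - a)) by (apply Hx; unfold c'; lra).
  destruct (MVT_cor2 g g' c' b ltac:(unfold c'; lra)) as [xi [Hxi1 Hxi2]].
  { intros s Hs. apply Hder. unfold c' in Hs. lra. }
  assert (g' xi <= A) by (apply Hpos; [|apply Hafter]; unfold c' in Hxi2; lra).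
  assert (g' xi * (b - c') <= A * (b - c')) by (apply Rmult_le_compat_r; unfold c'; lra).
  assert (A * (b - c') <= A * (b - a)) by (apply Rmult_le_compat_l; unfold c'; lra).
  destruct (Rabs_def2 _ _ Hgc'). lra.
Qed.

Lemma time_step_induction (P : R -> Prop) (h : R) : 0 < h -> P 0 ->
  (forall t0, 0 <= t0 -> P t0 -> forall t, t0 <= t <= t0 + h -> P t) ->
  forall t, 0 <= t -> P t.
Proof.
  intros Hh H0 Hstep.
  assert (Hk : forall k : nat, forall t, 0 <= t <= INR k * h -> P t).
  { induction k as [|k IH]; intros t Ht.
    - simpl in Ht. replace t with 0 by lra. exact H0.
    - rewrite S_INR in Ht. pose proof (pos_INR k).
      destruct (Rle_lt_dec t (INR k * h)) as [Hl|Hl].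
      + apply IH; lra.
      + apply (Hstep (INR k * h)); [nra| apply IH; nra | lra]. }
  intros t Ht. destruct (INR_archimed h t Hh) as [k Hk'].
  apply (Hk k). lra.
Qed.

Lemma sup_contraction {Y : Type} (q : R -> Y -> R) (lo hi k : R) : k < 1 ->
  (exists B, forall s y, lo <= s <= hi -> q s y <= B) ->
  (forall E, 0 <= E -> (forall s y, lo <= s <= hi -> q s y <= E) ->
     forall s y, lo <= s <= hi -> q s y <= k * E) ->
  forall s y, lo <= s <= hi -> q s y <= 0.
Proof.
  intros Hk [B HB] Hcontr s0 y0 Hs0.
  set (S := fun v => exists s y, lo <= s <= hi /\ v = q s y).
  assert (HbS : bound S) by (exists B; intros v [s [y [Hs ->]]]; auto).
  assert (HnS : exists v, S v) by (exists (q s0 y0), s0, y0; auto).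
  destruct (completeness S HbS HnS) as [E [Hub Hlub]].
  assert (Hin : forall s y, lo <= s <= hi -> q s y <= Rmax E 0).
  { intros s y Hs. eapply Rle_trans; [apply Hub; exists s, y; auto|apply Rmax_l]. }
  assert (HE : E <= k * Rmax E 0).
  { apply Hlub. intros v [s [y [Hs ->]]]. apply Hcontr; auto. apply Rmax_r. }
  assert (Hzero : Rmax E 0 = 0).
  { unfold Rmax in *. destruct (Rle_dec E 0); [reflexivity|nra]. }
  rewrite <- Hzero. auto.
Qed.

Lemma forward_invariance {Y : Type} (g g' : R -> Y -> R) (A tau : R) : 0 <= A ->
  (forall y, g 0 y <= 0) ->
  (forall y, rcont (fun s => g s y) 0) ->
  (forall t y, 0 < t <= tau -> derivable_pt_lim (fun s => g s y) t (g' t y)) ->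
  (exists B, forall t y, 0 <= t <= tau -> g t y <= B) ->
  (forall t y E, 0 < t <= tau -> 0 <= E -> (forall y', g t y' <= E) -> 0 < g t y ->
     g' t y <= A * E) ->
  forall t y, 0 <= t <= tau -> g t y <= 0.
Proof.
  intros HA H0 Hrc0 Hder [B HB] Hrate.
  set (h := / (2 * A + 1)).
  assert (Hh : 0 < h) by (apply Rinv_0_lt_compat; lra).
  assert (HAh : A * h <= / 2).
  { unfold h. apply (Rmult_le_reg_r (2 * A + 1)); [lra|].
    rewrite Rmult_assoc, Rinv_l by lra. lra. }
  intros t y [Ht Htau].
  revert Htau y. apply (time_step_induction (fun t => t <= tau -> forall y, g t y <= 0) h Hh);
    [intros; auto| |exact Ht].
  intros t0 Ht0 HP t1 Ht1 Ht1tau y.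
  specialize (HP ltac:(lra)).
  apply (sup_contraction g t0 t1 (A * h)); [lra| |intros E HE Hstrip s y' Hs|lra].
  { exists B. intros s y' Hs. apply HB. lra. }
  destruct (Req_dec s t0) as [->|Hne].
  { specialize (HP y'). assert (0 <= A * h * E) by (apply Rmult_le_pos; nra). lra. }
  assert (Hgrow := growth_while_positive (fun s => g s y') (fun s => g' s y') t0 s (A * E)
                     ltac:(lra) ltac:(nra)).
  assert (A * E * (s - t0) <= A * h * E).
  { assert (0 <= A * E) by (apply Rmult_le_pos; lra).
    replace (A * h * E) with (A * E * h) by ring. apply Rmult_le_compat_l; lra. }
  enough (g s y' <= A * E * (s - t0)) by lra.
  apply Hgrow; auto.
  - destruct (Req_dec t0 0) as [->|Hne0]; [apply Hrc0|].
    apply (derivable_rcont _ t0 (g' t0 y')). apply Hder. lra.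
  - intros s' Hs'. apply Hder. lra.
  - intros s' Hs' Hpos. apply Hrate; auto; [lra|]. intros y''. apply Hstrip. lra.
Qed.

Lemma CV_const (a : R) : Un_cv (fun _ => a) a.
Proof. intros e He. exists O. intros n _. unfold Rdist. rewrite Rminus_diag, Rabs_R0. auto. Qed.

Lemma CV_lipschitz (phi : R -> R) (L : R) (a : nat -> R) (l : R) :
  (forall u v, Rabs (phi u - phi v) <= L * Rabs (u - v)) -> Un_cv a l ->
  Un_cv (fun n => phi (a n)) (phi l).
Proof.
  intros Hphi Ha. apply continuity_seq; [|exact Ha].
  intros e He. exists (e / (Rabs L + 1)). split; [apply Rdiv_lt_0_compat; [|pose proof (Rabs_pos L)]; lra|].
  intros u [_ Hu]. simpl in *. unfold Rdist in *.
  eapply Rle_lt_trans; [apply Hphi|].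
  apply Rle_lt_trans with ((Rabs L + 1) * Rabs (u - l)).
  { apply Rmult_le_compat_r; [apply Rabs_pos|pose proof (Rle_abs L); lra]. }
  pose proof (Rabs_pos L).
  apply (Rmult_lt_reg_r (/ (Rabs L + 1))); [apply Rinv_0_lt_compat; lra|].
  replace ((Rabs L + 1) * Rabs (u - l) * / (Rabs L + 1)) with (Rabs (u - l)) by (field; lra).
  unfold Rdiv in Hu. lra.
Qed.

Lemma CV_eventual_bounds (a : nat -> R) (l lo hi : R) (N : nat) : Un_cv a l ->
  (forall n, (N <= n)%nat -> lo <= a n <= hi) -> lo <= l <= hi.
Proof.
  intros Ha Hb. pose proof (CV_shift' a N l Ha) as Hs.
  split.
  - apply (@Rle_cv_lim (fun _ => lo) (fun n => a (n + N)%nat)); [|apply CV_const|exact Hs].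
    intros n. apply Hb. lia.
  - apply (@Rle_cv_lim (fun n => a (n + N)%nat) (fun _ => hi)); [|exact Hs|apply CV_const].
    intros n. apply Hb. lia.
Qed.

Lemma CV_eventual_abs_bound (a : nat -> R) (l r : R) (N : nat) : Un_cv a l ->
  (forall n, (N <= n)%nat -> Rabs (a n) <= r) -> Rabs l <= r.
Proof.
  intros Ha Hb. apply Rabs_le, (CV_eventual_bounds a l (- r) r N Ha).
  intros n Hn. apply Rabs_le_bounds, Hb, Hn.
Qed.

Lemma eventually_large (T r : R) : 0 < T -> exists N : nat, forall n, (N <= n)%nat -> r < INR n * T.
Proof.
  intros HT. destruct (INR_archimed T r HT) as [N HN].
  exists N. intros n Hn. pose proof (le_INR _ _ Hn).
  assert (INR N * T <= INR n * T) by (apply Rmult_le_compat_r; lra). lra.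
Qed.

Lemma derivable_pt_lim_shift (F : R -> R) (a t l : R) : derivable_pt_lim F (t + a) l ->
  derivable_pt_lim (fun s => F (s + a)) t l.
Proof.
  intros H.
  assert (Hid : derivable_pt_lim (fun s => s + a) t 1).
  { replace 1 with (1 + 0) by ring.
    apply (derivable_pt_lim_plus id (fct_cte a)); [apply derivable_pt_lim_id|apply derivable_pt_lim_const]. }
  assert (Hc := derivable_pt_lim_comp (fun s => s + a) F t 1 l Hid H).
  rewrite Rmult_1_r in Hc. exact Hc.
Qed.

Lemma mvt_quotient (F F' : R -> R) (s0 hh : R) : hh <> 0 ->
  (forall s, Rabs (s - s0) <= Rabs hh -> derivable_pt_lim F s (F' s)) ->
  exists xi, Rabs (xi - s0) < Rabs hh /\ (F (s0 + hh) - F s0) / hh = F' xi.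
Proof.
  intros Hh Hder.
  destruct (Rtotal_order hh 0) as [Hl|[He|Hg]]; [|lra|].
  - rewrite Rabs_left in * by lra.
    destruct (MVT_cor2 F F' (s0 + hh) s0 ltac:(lra)) as [xi [Hxi Hxi2]].
    { intros s Hs. apply Hder. rewrite Rabs_left1; lra. }
    exists xi. split; [rewrite Rabs_left1; lra|].
    apply (Rmult_eq_reg_r hh); [|lra]. field_simplify; lra.
  - rewrite Rabs_right in * by lra.
    destruct (MVT_cor2 F F' s0 (s0 + hh) ltac:(lra)) as [xi [Hxi Hxi2]].
    { intros s Hs. apply Hder. rewrite Rabs_right; lra. }
    exists xi. split; [rewrite Rabs_right; lra|].
    apply (Rmult_eq_reg_r hh); [|lra]. field_simplify; [|lra]. rewrite Hxi. ring.
Qed.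

Lemma lipschitz_of_derivative_bound (F F' : R -> R) (a b C : R) :
  (forall s, a <= s <= b -> derivable_pt_lim F s (F' s)) ->
  (forall s, a <= s <= b -> Rabs (F' s) <= C) ->
  forall s1 s2, a <= s1 <= b -> a <= s2 <= b -> Rabs (F s1 - F s2) <= C * Rabs (s1 - s2).
Proof.
  intros Hder Hbd.
  assert (Hord : forall s1 s2, a <= s1 -> s1 < s2 <= b -> Rabs (F s2 - F s1) <= C * (s2 - s1)).
  { intros s1 s2 Hs1 Hs.
    destruct (MVT_cor2 F F' s1 s2 ltac:(lra)) as [xi [Hxi Hxi2]].
    { intros s Hs'. apply Hder. lra. }
    rewrite Hxi, Rabs_mult, (Rabs_right (s2 - s1)) by lra.
    apply Rmult_le_compat_r; [lra|]. apply Hbd. lra. }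
  intros s1 s2 Hs1 Hs2.
  destruct (Rtotal_order s1 s2) as [Hl|[He|Hg]].
  - rewrite Rabs_minus_sym, (Rabs_left (s1 - s2)) by lra.
    replace (- (s1 - s2)) with (s2 - s1) by ring. apply Hord; lra.
  - subst. unfold Rminus. rewrite !Rplus_opp_r, Rabs_R0. lra.
  - rewrite (Rabs_right (s1 - s2)) by lra. apply Hord; lra.
Qed.

Lemma derivative_of_limit (Gn gn : nat -> R -> R) (V : R -> R) (s0 l : R) :
  (forall s, Un_cv (fun n => Gn n s) (V s)) ->
  Un_cv (fun n => gn n s0) l ->
  (forall r, exists N, forall n, (N <= n)%nat -> forall s, Rabs (s - s0) <= r ->
     derivable_pt_lim (Gn n) s (gn n s)) ->
  (forall eps, 0 < eps -> exists del N, 0 < del /\ forall n, (N <= n)%nat ->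
     forall s, Rabs (s - s0) < del -> Rabs (gn n s - gn n s0) <= eps) ->
  derivable_pt_lim V s0 l.
Proof.
  intros HV Hg Hder Heq eps Heps.
  destruct (Heq (eps / 2) ltac:(lra)) as [del [N [Hdel HN]]].
  exists (mkposreal del Hdel). intros hh Hh0 Hhh. simpl in Hhh.
  destruct (Hder (Rabs hh)) as [N2 HN2].
  assert (Hcv : Un_cv (fun n => (Gn n (s0 + hh) - Gn n s0) / hh - gn n s0)
                      ((V (s0 + hh) - V s0) / hh - l)).
  { apply CV_minus; [|exact Hg]. unfold Rdiv.
    apply CV_mult; [apply CV_minus; apply HV|apply CV_const]. }
  enough (Rabs ((V (s0 + hh) - V s0) / hh - l) <= eps / 2) by lra.
  apply (CV_eventual_abs_bound _ _ _ (Nat.max N N2) Hcv).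
  intros n Hn.
  destruct (mvt_quotient (Gn n) (gn n) s0 hh Hh0) as [xi [Hxi Hq]].
  { apply HN2. lia. }
  rewrite Hq. apply HN; [lia|lra].
Qed.

Lemma flr_spec (x : R) : IZR (flr x) <= x < IZR (flr x) + 1.
Proof.
  unfold flr. rewrite minus_IZR. destruct (archimed x) as [H1 H2]. simpl. lra.
Qed.

Lemma periodic_multiple (p : R -> R) (T : R) : (forall t, p (t + T) = p t) ->
  forall k t, p (t + IZR k * T) = p t.
Proof.
  intros H.
  assert (Hn : forall (n : nat) t, p (t + INR n * T) = p t).
  { induction n as [|n IH]; intros t.
    - simpl. f_equal. ring.
    - rewrite S_INR. replace (t + (INR n + 1) * T) with ((t + INR n * T) + T) by ring.
      rewrite H. apply IH. }
  intros k t. destruct (Z_le_gt_dec 0 k) as [Hk|Hk].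
  - rewrite <- (Z2Nat.id k Hk), <- INR_IZR_INZ. apply Hn.
  - rewrite <- (Hn (Z.to_nat (- k)) (t + IZR k * T)). f_equal.
    rewrite INR_IZR_INZ, Z2Nat.id, opp_IZR by lia. ring.
Qed.

Lemma periodic_reduce (p : R -> R) (T : R) : 0 < T -> (forall t, p (t + T) = p t) ->
  forall t, exists t', 0 <= t' <= T /\ p t = p t'.
Proof.
  intros HT H t. pose proof (flr_spec (t / T)) as [H1 H2].
  exists (t + IZR (- flr (t / T)) * T). split.
  - rewrite opp_IZR.
    assert (Ht : t = t / T * T) by (field; lra).
    split; [|rewrite Ht at 1]; nra.
  - symmetry. apply periodic_multiple, H.
Qed.

Lemma lattice_periodic_mod (g : Z -> R) (J : Z) : (0 < J)%Z -> (forall j, g (j + J)%Z = g j) ->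
  forall j, g j = g (j mod J)%Z.
Proof.
  intros HJ H j.
  assert (Hn : forall (q : nat) r, g (r + Z.of_nat q * J)%Z = g r).
  { induction q as [|q IH]; intros r.
    - f_equal. lia.
    - replace (r + Z.of_nat (S q) * J)%Z with ((r + Z.of_nat q * J) + J)%Z by lia.
      rewrite H. apply IH. }
  assert (Hq : forall q r, g (r + q * J)%Z = g r).
  { intros q r. destruct (Z_le_gt_dec 0 q) as [Hq|Hq].
    - replace q with (Z.of_nat (Z.to_nat q)) by lia. apply Hn.
    - rewrite <- (Hn (Z.to_nat (- q)) (r + q * J)%Z). f_equal. lia. }
  rewrite (Z_div_mod_eq_full j J) at 1.
  rewrite <- (Hq (j / J)%Z (j mod J)%Z). f_equal. lia.
Qed.

Lemma le_sum_f_R0 (An : nat -> R) (n k : nat) : (forall i, 0 <= An i) -> (k <= n)%nat ->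
  An k <= sum_f_R0 An n.
Proof.
  intros Hpos. induction n as [|n IH]; intros Hk.
  - replace k with O by lia. simpl. lra.
  - simpl. destruct (Nat.eq_dec k (S n)) as [->|Hne].
    + assert (0 <= sum_f_R0 An n) by (apply cond_pos_sum; auto). lra.
    + specialize (IH ltac:(lia)). specialize (Hpos (S n)). lra.
Qed.

(* A lattice-periodic function takes finitely many values, hence is bounded. *)
Lemma lattice_periodic_bounded (g : Z -> R) (J : Z) : (0 < J)%Z ->
  (forall j, g (j + J)%Z = g j) -> exists G, forall j, Rabs (g j) <= G.
Proof.
  intros HJ H. exists (sum_f_R0 (fun i => Rabs (g (Z.of_nat i))) (Z.to_nat J)).
  intros j. rewrite (lattice_periodic_mod g J HJ H j).
  assert (Hm := Z.mod_pos_bound j J HJ).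
  replace (j mod J)%Z with (Z.of_nat (Z.to_nat (j mod J))) by lia.
  apply (le_sum_f_R0 (fun i => Rabs (g (Z.of_nat i)))); [intros; apply Rabs_pos|lia].
Qed.

Lemma lattice_periodic_lower_bound (g : Z -> R) (J : Z) : (0 < J)%Z ->
  (forall j, g (j + J)%Z = g j) -> (forall j, 0 < g j) -> exists G, 0 < G /\ forall j, G <= g j.
Proof.
  intros HJ H Hp.
  destruct (lattice_periodic_bounded (fun j => / g j) J HJ) as [G HG].
  { intros j. rewrite H. auto. }
  assert (Hinv : forall j, 0 < / g j) by (intros j; apply Rinv_0_lt_compat, Hp).
  assert (HG0 : 0 < G) by (specialize (HG 0%Z); specialize (Hinv 0%Z);
                           rewrite Rabs_right in HG; lra).
  exists (/ G). split; [apply Rinv_0_lt_compat; auto|].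
  intros j. specialize (HG j). rewrite Rabs_right in HG by (apply Rle_ge, Rlt_le, Hinv).
  rewrite <- (Rinv_inv (g j)). apply Rinv_le_contravar; auto.
Qed.

(* Powers with positive exponent of numbers in [0, 1] are at most 1 (note that
   Stdlib's [Rpower 0 a] is [1]). *)
Lemma Rpower_le_1 (r a : R) : 0 <= r <= 1 -> 0 < a -> Rpower r a <= 1.
Proof.
  intros Hr Ha. unfold Rpower. rewrite <- exp_0.
  assert (ln r <= 0).
  { destruct (Req_dec r 0) as [->|Hn].
    - unfold ln. destruct (Rlt_dec 0 0) as [hh|hh]; [exfalso; exact (Rlt_irrefl 0 hh)|right; reflexivity].
    - rewrite <- ln_1. destruct (Req_dec r 1) as [->|]; [right; reflexivity|].
      left; apply ln_increasing; lra. }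
  destruct (Req_dec (a * ln r) 0) as [->|]; [lra|].
  left. apply exp_increasing. nra.
Qed.

Lemma holder_oscillation (p : R -> R) (C a : R) : 0 < a ->
  (forall t s, Rabs (t - s) <= 1 -> Rabs (p t - p s) <= C * Rpower (Rabs (t - s)) a) ->
  forall (n : nat) t, 0 <= t <= INR n -> Rabs (p t - p 0) <= INR n * Rabs C.
Proof.
  intros Ha H.
  assert (Hstep : forall t s, Rabs (t - s) <= 1 -> Rabs (p t - p s) <= Rabs C).
  { intros t s Hts. eapply Rle_trans; [apply H; auto|].
    pose proof (Rpower_le_1 (Rabs (t - s)) a (conj (Rabs_pos _) Hts) Ha).
    assert (0 < Rpower (Rabs (t - s)) a) by apply exp_pos.
    apply Rle_trans with (Rabs C * Rpower (Rabs (t - s)) a).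
    - apply Rmult_le_compat_r; [lra|apply Rle_abs].
    - pose proof (Rabs_pos C). nra. }
  induction n as [|n IH]; intros t Ht.
  - simpl in *. replace t with 0 by lra. unfold Rminus. rewrite Rplus_opp_r, Rabs_R0. lra.
  - rewrite S_INR in *. pose proof (Rabs_pos C). pose proof (pos_INR n).
    destruct (Rle_lt_dec t 1) as [Hl|Hl].
    + assert (Rabs (p t - p 0) <= Rabs C) by (apply Hstep; rewrite Rminus_0_r, Rabs_right; lra).
      nra.
    + assert (Rabs (p t - p (t - 1)) <= Rabs C)
        by (apply Hstep; replace (t - (t - 1)) with 1 by ring; rewrite Rabs_R1; lra).
      assert (Rabs (p (t - 1) - p 0) <= INR n * Rabs C) by (apply IH; lra).
      replace (p t - p 0) with ((p t - p (t - 1)) + (p (t - 1) - p 0)) by ring.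
      eapply Rle_trans; [apply Rabs_triang|]. lra.
Qed.

(* Under (H0), [f(t, j, 0)] is bounded: it is periodic in both variables and
   Hoelder continuous in time. *)
Lemma f_zero_bounded (T : R) (J : Z) (M0 : R) (f fu : R -> Z -> R -> R) :
  0 < T -> (0 < J)%Z -> hyp_H0 T J M0 f fu -> exists F0, forall t j, Rabs (f t j 0) <= F0.
Proof.
  intros HT HJ [[a [Ha Hhol]] [_ [_ [_ [_ [_ [_ [_ [HpT HpJ]]]]]]]]].
  destruct (Hhol 0) as [C HC].
  destruct (INR_unbounded T) as [n Hn].
  destruct (lattice_periodic_bounded (fun j => f 0 j 0) J HJ (fun j => HpJ 0 j 0)) as [G HG].
  exists (G + INR n * Rabs C). intros t j.
  destruct (periodic_reduce (fun t => f t j 0) T HT (fun t => HpT t j 0) t) as [t' [Ht' ->]].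
  rewrite (lattice_periodic_mod (fun j => f t' j 0) J HJ (fun j => HpJ t' j 0) j).
  set (r := (j mod J)%Z).
  assert (Hosc := holder_oscillation (fun t => f t r 0) C a (proj1 Ha)
     (fun t s Hts => HC t s r 0 ltac:(rewrite Rabs_R0; lra) Hts) n t' ltac:(lra)).
  simpl in Hosc. specialize (HG r).
  replace (f t' r 0) with (f 0 r 0 + (f t' r 0 - f 0 r 0)) by ring.
  eapply Rle_trans; [apply Rabs_triang|]. lra.
Qed.

Definition is_sol (d : R -> Z -> R) (f : R -> Z -> R -> R) (z : R) (w : R -> R -> R) : Prop :=
  (forall t x, 0 < t -> derivable_pt_lim (fun s => w s x) t (sc_rhs d f z t (fun y => w t y) x)) /\
  (forall x, rcont (fun s => w s x) 0) /\
  (forall tau, exists B, forall t x, 0 <= t <= tau -> Rabs (w t x) <= B).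

Lemma rcont_const (k a : R) : rcont (fun _ => k) a.
Proof. intros eps Heps. exists 1. split; [lra|]. intros s _. rewrite Rminus_diag, Rabs_R0. lra. Qed.

Lemma rcont_scaled_diff (g1 g2 : R -> R) (k a : R) : rcont g1 a -> rcont g2 a ->
  rcont (fun s => k * (g1 s - g2 s)) a.
Proof.
  intros H1 H2 eps Heps.
  set (e := eps / (4 * (Rabs k + 1))).
  assert (He : 0 < e) by (unfold e; pose proof (Rabs_pos k); apply Rdiv_lt_0_compat; lra).
  destruct (H1 e He) as [d1 [Hd1 Hx1]]. destruct (H2 e He) as [d2 [Hd2 Hx2]].
  exists (Rmin d1 d2); split; [apply Rmin_glb_lt; auto|].
  intros s Hs. pose proof (Rmin_l d1 d2). pose proof (Rmin_r d1 d2).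
  specialize (Hx1 s ltac:(lra)). specialize (Hx2 s ltac:(lra)).
  replace (k * (g1 s - g2 s) - k * (g1 a - g2 a)) with (k * ((g1 s - g1 a) - (g2 s - g2 a))) by ring.
  rewrite Rabs_mult. pose proof (Rabs_pos k).
  assert (Hd : Rabs ((g1 s - g1 a) - (g2 s - g2 a)) < 2 * e).
  { unfold Rminus at 1. eapply Rle_lt_trans; [apply Rabs_triang|]. rewrite Rabs_Ropp. lra. }
  apply Rle_lt_trans with ((Rabs k + 1) * (2 * e)).
  - apply Rmult_le_compat; try lra. apply Rabs_pos.
  - unfold e. replace ((Rabs k + 1) * (2 * (eps / (4 * (Rabs k + 1))))) with (eps / 2)
      by (field; pose proof (Rabs_pos k); lra). lra.
Qed.

Lemma derivable_scaled_diff (g1 g2 : R -> R) (k s l1 l2 : R) :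
  derivable_pt_lim g1 s l1 -> derivable_pt_lim g2 s l2 ->
  derivable_pt_lim (fun s => k * (g1 s - g2 s)) s (k * (l1 - l2)).
Proof.
  intros H1 H2. apply (derivable_pt_lim_scal (minus_fct g1 g2)).
  apply derivable_pt_lim_minus; auto.
Qed.

Section ComparisonPrinciples.
Variables (d : R -> Z -> R) (f : R -> Z -> R -> R) (Bd F0 L M0 : R).
Hypothesis Hdpos : forall t j, 0 <= d t j.
Hypothesis HdB : forall t j, d t j <= Bd.
Hypothesis HF0 : forall t j, Rabs (f t j 0) <= F0.
Hypothesis HL : forall t j u v, Rabs (f t j u - f t j v) <= L * Rabs (u - v).
Hypothesis Hneg : forall t j u, u <= 0 -> f t j u = f t j 0.
Hypothesis HM0 : forall t j u, M0 <= u -> f t j u < 0.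
Hypothesis HM0p : 0 < M0.

Lemma Bd_nonneg : 0 <= Bd.
Proof. specialize (Hdpos 0 0%Z); specialize (HdB 0 0%Z); lra. Qed.

Lemma F0_nonneg : 0 <= F0.
Proof. specialize (HF0 0 0%Z). pose proof (Rabs_pos (f 0 0%Z 0)). lra. Qed.

Lemma L_nonneg : 0 <= L.
Proof.
  specialize (HL 0 0%Z 1 0). rewrite Rminus_0_r, Rabs_R1 in HL.
  pose proof (Rabs_pos (f 0 0%Z 1 - f 0 0%Z 0)). lra.
Qed.

Lemma diffusion_term_le (D a E : R) : 0 <= D <= Bd -> 0 <= E -> a <= E -> D * a <= Bd * E.
Proof.
  intros. apply Rle_trans with (D * E); [apply Rmult_le_compat_l|apply Rmult_le_compat_r]; lra.
Qed.

Lemma sol_bounded_above z w tau : is_sol d f z w -> forall k c,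
  exists B, forall t x, 0 <= t <= tau -> k * (w t x - c) <= B.
Proof.
  intros [_ [_ Hbd]] k c. destruct (Hbd tau) as [B HB].
  exists (Rabs k * (B + Rabs c)). intros t x Ht.
  eapply Rle_trans; [apply Rle_abs|]. rewrite Rabs_mult.
  apply Rmult_le_compat_l; [apply Rabs_pos|].
  unfold Rminus. eapply Rle_trans; [apply Rabs_triang|]. rewrite Rabs_Ropp.
  specialize (HB t x Ht). lra.
Qed.

(* Solutions starting below a level [K >= M0] (above which [f < 0]) stay below it. *)
Lemma max_principle z w K : is_sol d f z w -> M0 <= K ->
  (forall x, w 0 x <= K) -> forall t x, 0 <= t -> w t x <= K.
Proof.
  intros Hs HK H0 t x Ht. pose proof Bd_nonneg.
  assert (Hinv := forward_invariance (fun t x => 1 * (w t x - K))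
    (fun t x => 1 * (sc_rhs d f z t (fun y => w t y) x - 0)) (2 * Bd) t ltac:(lra)).
  enough (1 * (w t x - K) <= 0) by lra.
  pose proof Hs as [Hder [Hrc _]].
  apply Hinv; [intros y; specialize (H0 y); lra| | |exact (sol_bounded_above z w t Hs _ _)| |lra].
  - intros y. apply rcont_scaled_diff; [apply Hrc|apply rcont_const].
  - intros s y Hsy. apply derivable_scaled_diff; [apply Hder; lra|apply derivable_pt_lim_const].
  - intros s y E Hsy HE Hstrip Hpos. simpl in *. unfold sc_rhs, ext.
    assert (Hi1 := Hstrip (y + 1)). assert (Hi2 := Hstrip (y - 1)).
    assert (Hf : w s y * f s (flr (y + z)) (w s y) < 0)
      by (assert (f s (flr (y + z)) (w s y) < 0) by (apply HM0; lra); nra).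
    assert (Ha := diffusion_term_le (d s (flr (y + z + 1))) (w s (y + 1) - w s y) E
                   (conj (Hdpos _ _) (HdB _ _)) HE ltac:(lra)).
    assert (Hb := diffusion_term_le (d s (flr (y + z - 1))) (w s (y - 1) - w s y) E
                   (conj (Hdpos _ _) (HdB _ _)) HE ltac:(lra)).
    lra.
Qed.

Lemma min_principle z w : is_sol d f z w ->
  (forall x, 0 <= w 0 x) -> forall t x, 0 <= t -> 0 <= w t x.
Proof.
  intros Hs H0 t x Ht. pose proof Bd_nonneg. pose proof F0_nonneg.
  assert (Hinv := forward_invariance (fun t x => -1 * (w t x - 0))
    (fun t x => -1 * (sc_rhs d f z t (fun y => w t y) x - 0)) (2 * Bd + F0) t ltac:(lra)).
  enough (-1 * (w t x - 0) <= 0) by lra.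
  pose proof Hs as [Hder [Hrc _]].
  apply Hinv; [intros y; specialize (H0 y); lra| | |exact (sol_bounded_above z w t Hs _ _)| |lra].
  - intros y. apply rcont_scaled_diff; [apply Hrc|apply rcont_const].
  - intros s y Hsy. apply derivable_scaled_diff; [apply Hder; lra|apply derivable_pt_lim_const].
  - intros s y E Hsy HE Hstrip Hpos. simpl in *. unfold sc_rhs, ext.
    assert (Hi1 := Hstrip (y + 1)). assert (Hi2 := Hstrip (y - 1)). assert (Hi0 := Hstrip y).
    rewrite (Hneg _ _ (w s y)) by lra.
    assert (Hf0 := Rabs_le_bounds _ _ (HF0 s (flr (y + z)))).
    assert (Hreact : (- w s y) * f s (flr (y + z)) 0 <= E * F0).
    { apply Rle_trans with ((- w s y) * F0); [apply Rmult_le_compat_l|apply Rmult_le_compat_r]; lra. }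
    assert (Ha := diffusion_term_le (d s (flr (y + z + 1))) (- w s (y + 1) - - w s y) E
                   (conj (Hdpos _ _) (HdB _ _)) HE ltac:(lra)).
    assert (Hb := diffusion_term_le (d s (flr (y + z - 1))) (- w s (y - 1) - - w s y) E
                   (conj (Hdpos _ _) (HdB _ _)) HE ltac:(lra)).
    lra.
Qed.

Lemma f_bound t j u B : Rabs u <= B -> Rabs (f t j u) <= F0 + L * B.
Proof.
  intros Hu. pose proof L_nonneg.
  replace (f t j u) with (f t j 0 + (f t j u - f t j 0)) by ring.
  eapply Rle_trans; [apply Rabs_triang|].
  specialize (HL t j u 0). rewrite Rminus_0_r in HL.
  assert (L * Rabs u <= L * B) by (apply Rmult_le_compat_l; lra).
  specialize (HF0 t j). lra.
Qed.

Lemma Rabs_mult_le (a b A B : R) : Rabs a <= A -> Rabs b <= B -> Rabs (a * b) <= A * B.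
Proof. intros. rewrite Rabs_mult. apply Rmult_le_compat; auto; apply Rabs_pos. Qed.

Lemma diffusion_coef_abs t j : Rabs (d t j) <= Bd.
Proof. rewrite Rabs_right; [apply HdB|apply Rle_ge, Hdpos]. Qed.

Lemma rhs_lipschitz z s x (w1 w2 : R -> R) B E : 0 <= B ->
  (forall y, Rabs (w1 y) <= B) -> (forall y, Rabs (w2 y) <= B) ->
  (forall y, Rabs (w1 y - w2 y) <= E) ->
  Rabs (sc_rhs d f z s w1 x - sc_rhs d f z s w2 x) <= (4 * Bd + F0 + 2 * L * B) * E.
Proof.
  intros HB H1 H2 HE. unfold sc_rhs, ext.
  set (Da := d s (flr (x + z + 1))). set (Db := d s (flr (x + z - 1))).
  set (j := flr (x + z)).
  assert (Hjump : forall y, Rabs ((w1 y - w1 x) - (w2 y - w2 x)) <= 2 * E).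
  { intros y. replace ((w1 y - w1 x) - (w2 y - w2 x)) with ((w1 y - w2 y) + - (w1 x - w2 x)) by ring.
    eapply Rle_trans; [apply Rabs_triang|]. rewrite Rabs_Ropp.
    pose proof (HE y); pose proof (HE x); lra. }
  assert (Hreact : Rabs (w1 x * f s j (w1 x) - w2 x * f s j (w2 x)) <= E * (F0 + L * B) + B * (L * E)).
  { replace (w1 x * f s j (w1 x) - w2 x * f s j (w2 x)) with
      ((w1 x - w2 x) * f s j (w1 x) + w2 x * (f s j (w1 x) - f s j (w2 x))) by ring.
    eapply Rle_trans; [apply Rabs_triang|]. apply Rplus_le_compat.
    - apply Rabs_mult_le; auto. apply f_bound; auto.
    - apply Rabs_mult_le; auto. eapply Rle_trans; [apply HL|].
      apply Rmult_le_compat_l; [apply L_nonneg|auto]. }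
  replace (Da * (w1 (x + 1) - w1 x) + Db * (w1 (x - 1) - w1 x) + w1 x * f s j (w1 x) -
    (Da * (w2 (x + 1) - w2 x) + Db * (w2 (x - 1) - w2 x) + w2 x * f s j (w2 x))) with
    (Da * ((w1 (x + 1) - w1 x) - (w2 (x + 1) - w2 x)) +
     Db * ((w1 (x - 1) - w1 x) - (w2 (x - 1) - w2 x)) +
     (w1 x * f s j (w1 x) - w2 x * f s j (w2 x))) by ring.
  eapply Rle_trans; [apply Rabs_triang|].
  eapply Rle_trans; [apply Rplus_le_compat_r; apply Rabs_triang|].
  assert (A1 := Rabs_mult_le _ _ _ _ (diffusion_coef_abs s (flr (x + z + 1))) (Hjump (x + 1))).
  assert (A2 := Rabs_mult_le _ _ _ _ (diffusion_coef_abs s (flr (x + z - 1))) (Hjump (x - 1))).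
  fold Da Db in A1, A2. lra.
Qed.

(* Uniqueness for the Cauchy problem: apply forward invariance to both signs
   of the difference of two solutions with the same initial data. *)
Lemma uniqueness z w1 w2 : is_sol d f z w1 -> is_sol d f z w2 ->
  (forall x, w1 0 x = w2 0 x) -> forall t x, 0 <= t -> w1 t x = w2 t x.
Proof.
  intros Hs1 Hs2 H0 tau x Htau.
  pose proof Bd_nonneg. pose proof F0_nonneg. pose proof L_nonneg.
  destruct Hs1 as [Hder1 [Hrc1 Hbd1]]. destruct Hs2 as [Hder2 [Hrc2 Hbd2]].
  destruct (Hbd1 tau) as [B1 HB1]. destruct (Hbd2 tau) as [B2 HB2].
  set (B := Rmax B1 B2).
  assert (HBB : B1 <= B /\ B2 <= B) by (split; [apply Rmax_l|apply Rmax_r]).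
  assert (HB0 : 0 <= B) by (specialize (HB1 0 0 ltac:(lra)); pose proof (Rabs_pos (w1 0 0)); lra).
  set (sgn := fun b : bool => if b then 1 else -1).
  assert (Hinv := forward_invariance (fun t yb => sgn (snd yb) * (w1 t (fst yb) - w2 t (fst yb)))
    (fun t yb => sgn (snd yb) * (sc_rhs d f z t (fun y => w1 t y) (fst yb)
                                 - sc_rhs d f z t (fun y => w2 t y) (fst yb)))
    (4 * Bd + F0 + 2 * L * B) tau ltac:(assert (0 <= L * B) by (apply Rmult_le_pos; lra); lra)).
  assert (Hsign : forall b, sgn b * (w1 tau x - w2 tau x) <= 0).
  { intros b. refine (Hinv _ _ _ _ _ tau (x, b) _); simpl; [intros [y b']; simpl; rewrite H0; lra| | | | |lra].
    - intros [y b']. apply rcont_scaled_diff; auto.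
    - intros s [y b'] Hs. apply derivable_scaled_diff; [apply Hder1|apply Hder2]; lra.
    - exists (B + B). intros s [y b'] Hs. simpl.
      specialize (HB1 s y Hs). specialize (HB2 s y Hs).
      destruct b'; simpl; apply Rabs_le_bounds in HB1; apply Rabs_le_bounds in HB2; lra.
    - intros s [y b'] E Hs HE Hstrip _. simpl.
      assert (Hdiff : forall y', Rabs (w1 s y' - w2 s y') <= E).
      { intros y'. apply Rabs_le.
        pose proof (Hstrip (y', true)). pose proof (Hstrip (y', false)). simpl in *. lra. }
      assert (Hl := rhs_lipschitz z s y (fun y => w1 s y) (fun y => w2 s y) B E HB0
        ltac:(intros y'; specialize (HB1 s y' ltac:(lra)); lra)
        ltac:(intros y'; specialize (HB2 s y' ltac:(lra)); lra) Hdiff).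
      apply Rabs_le_bounds in Hl. destruct b'; simpl; lra. }
  pose proof (Hsign true). pose proof (Hsign false). simpl in *. lra.
Qed.
End ComparisonPrinciples.

Lemma two_exp_bounded (a b m m' : R) : 0 < a -> 0 < b -> 0 < m < m' ->
  exists V, forall y, a * exp (- m * y) - b * exp (- m' * y) <= V.
Proof.
  intros Ha Hb Hm.
  set (y1 := - (a / b) / (m' - m) - 1).
  exists (a * exp (- m * y1)). intros y.
  pose proof (exp_pos (- m * y)). pose proof (exp_pos (- m' * y)). pose proof (exp_pos (- m * y1)).
  destruct (Rle_lt_dec y1 y) as [Hy|Hy].
  - (* far right: the first term is decreasing *)
    assert (exp (- m * y) <= exp (- m * y1)).
    { destruct (Req_dec y y1) as [->|]; [lra|]. left; apply exp_increasing. nra. }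
    assert (a * exp (- m * y) <= a * exp (- m * y1)) by (apply Rmult_le_compat_l; lra).
    assert (0 < b * exp (- m' * y)) by (apply Rmult_lt_0_compat; lra).
    lra.
  - (* far left: the second term dominates *)
    assert (Hk : a / b <= exp ((m' - m) * - y)).
    { assert (Hmm : 0 < m' - m) by lra.
      assert (Hlin : a / b < (m' - m) * - y).
      { unfold y1 in Hy. apply (Rmult_lt_compat_r (m' - m)) in Hy; [|lra].
        replace ((- (a / b) / (m' - m) - 1) * (m' - m)) with (- (a / b) - (m' - m)) in Hy
          by (field; lra). nra. }
      assert (Hnz : (m' - m) * - y <> 0) by (assert (0 < a / b) by (apply Rdiv_lt_0_compat; lra); lra).
      pose proof (exp_ineq1 _ Hnz). lra. }
    replace (exp (- m' * y)) with (exp (- m * y) * exp ((m' - m) * - y))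
      by (rewrite <- exp_plus; f_equal; ring).
    assert (a <= b * exp ((m' - m) * - y)).
    { apply (Rmult_le_reg_r (/ b)); [apply Rinv_0_lt_compat; lra|].
      replace (b * exp ((m' - m) * - y) * / b) with (exp ((m' - m) * - y)) by (field; lra).
      unfold Rdiv in Hk. lra. }
    assert (a * exp (- m * y) <= b * exp ((m' - m) * - y) * exp (- m * y))
      by (apply Rmult_le_compat_r; lra).
    nra.
Qed.

Lemma two_exp_nonneg_right (a b m m' x0 y : R) : 0 <= b -> m < m' -> x0 <= y ->
  0 <= a * exp (- m * x0) - b * exp (- m' * x0) ->
  0 <= a * exp (- m * y) - b * exp (- m' * y).
Proof.
  intros Hb Hm Hy H.
  set (e1 := exp (- m * (y - x0))). set (e2 := exp (- m' * (y - x0))).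
  assert (He : e2 <= e1).
  { unfold e1, e2. destruct (Req_dec y x0) as [->|Hne].
    - rewrite Rminus_diag, !Rmult_0_r. lra.
    - left. apply exp_increasing. assert (x0 < y) by lra. nra. }
  assert (He1 : 0 < e1) by apply exp_pos.
  replace (exp (- m * y)) with (exp (- m * x0) * e1) by (unfold e1; rewrite <- exp_plus; f_equal; ring).
  replace (exp (- m' * y)) with (exp (- m' * x0) * e2) by (unfold e2; rewrite <- exp_plus; f_equal; ring).
  pose proof (exp_pos (- m' * x0)).
  assert (b * exp (- m' * x0) * e2 <= b * exp (- m' * x0) * e1)
    by (apply Rmult_le_compat_l; [apply Rmult_le_pos|]; lra).
  assert (0 <= e1 * (a * exp (- m * x0) - b * exp (- m' * x0))) by (apply Rmult_le_pos; lra).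
  nra.
Qed.

Section InitialData.
Variables (T : R) (J : Z) (d : R -> Z -> R) (f : R -> Z -> R -> R)
  (uplus : R -> Z -> R) (lam : R -> R) (psi : R -> R -> Z -> R)
  (c mu mu' dd d1 b N M : R).
Hypothesis HJ : (0 < J)%Z.
Hypothesis Hup : is_uplus d f uplus.
Hypothesis Heig : is_eigen T J d f lam psi.
Hypothesis Hmu : 0 < mu < mu'.
Hypothesis Hdd : 0 < dd.
Hypothesis Hd1 : 0 < d1.
Hypothesis Hb : 0 < b.
Hypothesis HNM : N <= M.
Hypothesis HM : forall t x z, N <= x - c * t <= M ->
          b * ext (psi 0) t (x + z) <= vlow psi c mu mu' dd d1 t x z.

Lemma psi_pos m t x : 0 < ext (psi m) t x.
Proof. destruct (Heig m) as [Hp _]. apply Hp. Qed.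

Lemma uupper_bounded : exists K, forall y z, 0 <= uupper psi uplus c mu mu' dd d1 0 y z <= K.
Proof.
  destruct Hup as [_ [a [B [Ha HB]]]].
  exists B. intros y z. unfold uupper, vup, ext in *.
  specialize (HB 0 (flr (y + z))).
  pose proof (psi_pos mu 0 (y + z)). pose proof (psi_pos mu' 0 (y + z)). unfold ext in *.
  pose proof (exp_pos (- mu * (y - c * 0))). pose proof (exp_pos (- mu' * (y - c * 0))).
  split.
  - apply Rmin_glb; [|lra].
    assert (0 < dd * exp (- mu * (y - c * 0)) * psi mu 0 (flr (y + z))) by (repeat apply Rmult_lt_0_compat; auto).
    assert (0 < d1 * exp (- mu' * (y - c * 0)) * psi mu' 0 (flr (y + z))) by (repeat apply Rmult_lt_0_compat; auto).
    lra.
  - eapply Rle_trans; [apply Rmin_r|]. lra.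
Qed.

Lemma vlow_bounded_above : exists V, forall y z, vlow psi c mu mu' dd d1 0 y z <= V.
Proof.
  destruct (lattice_periodic_bounded (fun j => psi mu 0 j) J HJ) as [P HP].
  { intros j. destruct (Heig mu) as [_ [_ [Hj _]]]. apply Hj. }
  destruct (lattice_periodic_lower_bound (fun j => psi mu' 0 j) J HJ) as [Q [HQ0 HQ]].
  { intros j. destruct (Heig mu') as [_ [_ [Hj _]]]. apply Hj. }
  { intros j. destruct (Heig mu') as [Hj _]. apply Hj. }
  destruct (two_exp_bounded (dd * (Rabs P + 1)) (d1 * Q) mu mu') as [V HV].
  { pose proof (Rabs_pos P). apply Rmult_lt_0_compat; lra. }
  { apply Rmult_lt_0_compat; lra. }
  { lra. }
  exists V. intros y z. unfold vlow, ext.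
  specialize (HV (y - c * 0)).
  set (k := flr (y + z)). specialize (HP k). specialize (HQ k). simpl in HP, HQ.
  pose proof (Rle_abs (psi mu 0 k)). pose proof (psi_pos mu 0 (y + z)) as Hpsi. unfold ext in Hpsi. fold k in Hpsi.
  pose proof (exp_pos (- mu * (y - c * 0))). pose proof (exp_pos (- mu' * (y - c * 0))).
  assert (dd * exp (- mu * (y - c * 0)) * psi mu 0 k
            <= dd * (Rabs P + 1) * exp (- mu * (y - c * 0))).
  { replace (dd * (Rabs P + 1) * exp (- mu * (y - c * 0)))
      with (dd * exp (- mu * (y - c * 0)) * (Rabs P + 1)) by ring.
    apply Rmult_le_compat_l; [apply Rmult_le_pos|]; pose proof (Rle_abs P); lra. }
  assert (d1 * Q * exp (- mu' * (y - c * 0)) <= d1 * exp (- mu' * (y - c * 0)) * psi mu' 0 k).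
  { replace (d1 * Q * exp (- mu' * (y - c * 0))) with (d1 * exp (- mu' * (y - c * 0)) * Q) by ring.
    apply Rmult_le_compat_l; [apply Rmult_le_pos|]; lra. }
  lra.
Qed.

Lemma vlow_nonneg_right y z : M < y -> 0 <= vlow psi c mu mu' dd d1 0 y z.
Proof.
  intros Hy.
  assert (H := HM 0 M (y + z - M) ltac:(lra)).
  replace (M + (y + z - M)) with (y + z) in H by ring.
  pose proof (psi_pos 0 0 (y + z)).
  assert (Hpos : 0 <= vlow psi c mu mu' dd d1 0 M (y + z - M))
    by (assert (0 < b * ext (psi 0) 0 (y + z)) by (apply Rmult_lt_0_compat; auto); lra).
  unfold vlow, ext in *. replace (M + (y + z - M)) with (y + z) in Hpos by ring.
  set (P := psi mu 0 (flr (y + z))) in *. set (Q := psi mu' 0 (flr (y + z))) in *.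
  pose proof (psi_pos mu' 0 (y + z)) as HQ. unfold ext in HQ. fold Q in HQ.
  replace (dd * exp (- mu * (y - c * 0)) * P - d1 * exp (- mu' * (y - c * 0)) * Q)
    with ((dd * P) * exp (- mu * (y - c * 0)) - (d1 * Q) * exp (- mu' * (y - c * 0))) by ring.
  apply (two_exp_nonneg_right _ _ _ _ (M - c * 0)); [apply Rmult_le_pos; lra|lra|lra|].
  replace ((dd * P) * exp (- mu * (M - c * 0)) - (d1 * Q) * exp (- mu' * (M - c * 0)))
    with (dd * exp (- mu * (M - c * 0)) * P - d1 * exp (- mu' * (M - c * 0)) * Q) by ring.
  exact Hpos.
Qed.

Lemma ulow_bounded : exists K, forall y z, 0 <= ulow psi c mu mu' dd d1 b M 0 y z <= K.
Proof.
  destruct (lattice_periodic_bounded (fun j => psi 0 0 j) J HJ) as [G0 HG0].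
  { intros j. destruct (Heig 0) as [_ [_ [Hj _]]]. apply Hj. }
  destruct vlow_bounded_above as [V HV].
  exists (Rmax (b * G0) V). intros y z. unfold ulow.
  assert (Hv := HV y z).
  destruct (Rle_dec y (M + c * 0)) as [Hy|Hy].
  - pose proof (psi_pos 0 0 (y + z)). specialize (HG0 (flr (y + z))).
    unfold ext in *. pose proof (Rle_abs (psi 0 0 (flr (y + z)))).
    split.
    + eapply Rle_trans; [|apply Rmax_l]. apply Rmult_le_pos; lra.
    + apply Rmax_lub.
      * eapply Rle_trans; [|apply Rmax_l]. apply Rmult_le_compat_l; lra.
      * eapply Rle_trans; [exact Hv|apply Rmax_r].
  - split; [apply vlow_nonneg_right; lra|].
    eapply Rle_trans; [exact Hv|apply Rmax_r].
Qed.
End InitialData.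

Lemma Rpower_small (e a : R) : 0 < e -> 0 < a -> exists r0, 0 < r0 /\
  forall r, 0 < r < r0 -> Rpower r a < e.
Proof.
  intros He Ha. exists (exp (ln e / a)). split; [apply exp_pos|].
  intros r Hr. unfold Rpower.
  assert (Hln : ln r < ln e / a) by (rewrite <- (ln_exp (ln e / a)); apply ln_increasing; lra).
  rewrite <- (exp_ln e) by lra. apply exp_increasing.
  apply (Rmult_lt_reg_r (/ a)); [apply Rinv_0_lt_compat; lra|].
  replace (a * ln r * / a) with (ln r) by (field; lra). exact Hln.
Qed.

Lemma linear_small (A eps : R) : 0 <= A -> 0 < eps ->
  exists r, 0 < r /\ forall x, 0 <= x < r -> A * x <= eps.
Proof.
  intros HA Heps. exists (eps / (A + 1)). split; [apply Rdiv_lt_0_compat; lra|].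
  intros x Hx. apply Rle_trans with ((A + 1) * x); [nra|].
  apply (Rmult_le_reg_r (/ (A + 1))); [apply Rinv_0_lt_compat; lra|].
  replace ((A + 1) * x * / (A + 1)) with x by (field; lra). unfold Rdiv in Hx. lra.
Qed.

Lemma sol_map_solution d f U u0 z : is_sol_map d f U -> (exists B, forall x, Rabs (u0 x) <= B) ->
  is_sol d f z (fun t x => U t x u0 z) /\ forall x, U 0 x u0 z = u0 x.
Proof.
  intros HU Hb. destruct (HU u0 z Hb) as [H0 [Hder [Hrc Hbd]]].
  split; [|exact H0]. split; [exact Hder|split; [|exact Hbd]].
  intros x eps Heps. destruct (Hrc x eps Heps) as [del [Hdel Hx]].
  exists del; split; auto. intros s Hs. apply Hx. lra.
Qed.

Lemma rhs_time_increment d f z s s0 (w : R -> R) x :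
  sc_rhs d f z s w x - sc_rhs d f z s0 w x =
    (d s (flr (x + z + 1)) - d s0 (flr (x + z + 1))) * (w (x + 1) - w x)
  + (d s (flr (x + z - 1)) - d s0 (flr (x + z - 1))) * (w (x - 1) - w x)
  + w x * (f s (flr (x + z)) (w x) - f s0 (flr (x + z)) (w x)).
Proof. unfold sc_rhs, ext. ring. Qed.

Section LimitOfTranslates.
Variables (T : R) (d : R -> Z -> R) (f : R -> Z -> R -> R) (Bd F0 L M0 alpha : R)
  (U : R -> R -> (R -> R) -> R -> R) (z c K : R) (dat : nat -> R -> R) (V : R -> R -> R).
Hypothesis HT : 0 < T.
Hypothesis Hdpos : forall t j, 0 <= d t j.
Hypothesis HdB : forall t j, d t j <= Bd.
Hypothesis Hdcont : forall j, continuity (fun t => d t j).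
Hypothesis HdT : forall t j, d (t + T) j = d t j.
Hypothesis HF0 : forall t j, Rabs (f t j 0) <= F0.
Hypothesis HL : forall t j u v, Rabs (f t j u - f t j v) <= L * Rabs (u - v).
Hypothesis Hneg : forall t j u, u <= 0 -> f t j u = f t j 0.
Hypothesis HM0 : forall t j u, M0 <= u -> f t j u < 0.
Hypothesis HM0p : 0 < M0.
Hypothesis HfT : forall t j u, f (t + T) j u = f t j u.
Hypothesis Halpha : 0 < alpha.
Hypothesis Hhol : forall R0, exists C, forall t s j u, Rabs u <= R0 -> Rabs (t - s) <= 1 ->
       Rabs (f t j u - f s j u) <= C * Rpower (Rabs (t - s)) alpha.
Hypothesis HU : is_sol_map d f U.
Hypothesis HK : M0 <= K.
Hypothesis Hdat : forall n y, 0 <= dat n y <= K.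

Definition translate (n : nat) (t x : R) : R :=
  U (t + INR n * T) (x + c * INR n * T) (dat n) (z - c * INR n * T).

Hypothesis HV : forall t x, Un_cv (fun n => translate n t x) (V t x).

Lemma dat_bounded n : exists B, forall y, Rabs (dat n y) <= B.
Proof. exists K. intros y. specialize (Hdat n y). rewrite Rabs_right; lra. Qed.

Lemma translate_sol n : is_sol d f (z - c * INR n * T) (fun t x => U t x (dat n) (z - c * INR n * T)).
Proof. apply (sol_map_solution d f U), dat_bounded. exact HU. Qed.

(* By the comparison principles, all translates take values in [0, K]. *)
Lemma translate_bounds n t x : 0 <= t + INR n * T -> 0 <= translate n t x <= K.
Proof.
  intros Ht. unfold translate.
  destruct (sol_map_solution d f U (dat n) (z - c * INR n * T) HU (dat_bounded n)) as [Hs H0].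
  split.
  - apply (min_principle d f Bd F0 Hdpos HdB HF0 Hneg _ _ Hs); auto.
    intros y. rewrite H0. apply Hdat.
  - apply (max_principle d f Bd M0 Hdpos HdB HM0 HM0p _ _ K Hs); auto.
    intros y. rewrite H0. apply Hdat.
Qed.

Lemma translate_abs_bound n t x : 0 <= t + INR n * T -> Rabs (translate n t x) <= K.
Proof. intros Ht. destruct (translate_bounds n t x Ht). rewrite Rabs_right; lra. Qed.

(* Time periodicity of the coefficients and the shifted space variable make the
   translates solve the equation with shift [z]. *)
Lemma translate_rhs n t x :
  sc_rhs d f (z - c * INR n * T) (t + INR n * T)
    (fun y => U (t + INR n * T) y (dat n) (z - c * INR n * T)) (x + c * INR n * T)
  = sc_rhs d f z t (fun y => translate n t y) x.
Proof.
  assert (Hd : forall t j, d (t + IZR (Z.of_nat n) * T) j = d t j)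
    by (intros t' j; exact (periodic_multiple (fun t => d t j) T (fun t => HdT t j) _ t')).
  assert (Hf : forall t j u, f (t + IZR (Z.of_nat n) * T) j u = f t j u)
    by (intros t' j u; exact (periodic_multiple (fun t => f t j u) T (fun t => HfT t j u) _ t')).
  rewrite <- INR_IZR_INZ in Hd, Hf.
  unfold sc_rhs, ext, translate. rewrite !Hd, Hf.
  replace (x + c * INR n * T + (z - c * INR n * T)) with (x + z) by ring.
  replace (x + c * INR n * T + 1) with (x + 1 + c * INR n * T) by ring.
  replace (x + c * INR n * T - 1) with (x - 1 + c * INR n * T) by ring.
  replace (x + 1 + c * INR n * T + (z - c * INR n * T)) with (x + z + 1) by ring.
  replace (x - 1 + c * INR n * T + (z - c * INR n * T)) with (x + z - 1) by ring.
  reflexivity.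
Qed.

Lemma translate_deriv n t x : 0 < t + INR n * T ->
  derivable_pt_lim (fun s => translate n s x) t (sc_rhs d f z t (fun y => translate n t y) x).
Proof.
  intros Ht. rewrite <- translate_rhs.
  apply (derivable_pt_lim_shift (fun s => U s (x + c * INR n * T) (dat n) (z - c * INR n * T))).
  destruct (translate_sol n) as [Hder _]. apply Hder, Ht.
Qed.

Definition rhs_bound := (4 * Bd + F0 + 2 * L * K) * K.

Lemma rhs_bounded z' s x (w : R -> R) : (forall y, Rabs (w y) <= K) ->
  Rabs (sc_rhs d f z' s w x) <= rhs_bound.
Proof.
  intros Hw. unfold rhs_bound.
  assert (H := rhs_lipschitz d f Bd F0 L Hdpos HdB HF0 HL z' s x w (fun _ => 0) K K
                 ltac:(lra) Hw ltac:(intros; cbv beta; rewrite Rabs_R0; lra)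
                 ltac:(intros y; cbv beta; rewrite Rminus_0_r; auto)).
  replace (sc_rhs d f z' s (fun _ => 0) x) with 0 in H by (unfold sc_rhs; ring).
  rewrite Rminus_0_r in H. exact H.
Qed.

Lemma translate_lipschitz n a b x : 0 < a + INR n * T -> forall s1 s2, a <= s1 <= b -> a <= s2 <= b ->
  Rabs (translate n s1 x - translate n s2 x) <= rhs_bound * Rabs (s1 - s2).
Proof.
  intros Ha. apply (lipschitz_of_derivative_bound (fun s => translate n s x)
    (fun s => sc_rhs d f z s (fun y => translate n s y) x)).
  - intros s Hs. apply translate_deriv. lra.
  - intros s Hs. apply rhs_bounded. intros y. apply translate_abs_bound. lra.
Qed.

Lemma rhs_convergence s x : Un_cv (fun n => sc_rhs d f z s (fun y => translate n s y) x)
                                 (sc_rhs d f z s (fun y => V s y) x).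
Proof.
  unfold sc_rhs.
  apply CV_plus; [apply CV_plus|].
  - apply CV_mult; [apply CV_const|apply CV_minus; apply HV].
  - apply CV_mult; [apply CV_const|apply CV_minus; apply HV].
  - apply CV_mult; [apply HV|].
    apply (CV_lipschitz (fun u => f s (flr (x + z)) u) L); [|apply HV].
    intros u v. apply HL.
Qed.

Lemma f_time_continuity s0 j eps : 0 < eps -> exists r, 0 < r /\
  forall s u, Rabs (s - s0) < r -> Rabs u <= K -> Rabs (f s j u - f s0 j u) <= eps.
Proof.
  intros Heps. destruct (Hhol K) as [C HC].
  pose proof (Rabs_pos C).
  destruct (Rpower_small (eps / (Rabs C + 1)) alpha ltac:(apply Rdiv_lt_0_compat; lra) Halpha)
    as [r0 [Hr0 Hr]].
  exists (Rmin 1 r0). split; [apply Rmin_glb_lt; lra|].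
  intros s u Hs Hu. pose proof (Rmin_l 1 r0). pose proof (Rmin_r 1 r0).
  destruct (Req_dec s s0) as [->|Hne]; [rewrite Rminus_diag, Rabs_R0; lra|].
  assert (Hpos : 0 < Rabs (s - s0)) by (apply Rabs_pos_lt; lra).
  eapply Rle_trans; [apply HC; [exact Hu|lra]|].
  specialize (Hr (Rabs (s - s0)) ltac:(lra)).
  assert (0 < Rpower (Rabs (s - s0)) alpha) by apply exp_pos.
  apply Rle_trans with (Rabs C * (eps / (Rabs C + 1))).
  - apply Rle_trans with (Rabs C * Rpower (Rabs (s - s0)) alpha).
    + apply Rmult_le_compat_r; [lra|apply Rle_abs].
    + apply Rmult_le_compat_l; lra.
  - apply (Rmult_le_reg_r (Rabs C + 1)); [lra|].
    replace (Rabs C * (eps / (Rabs C + 1)) * (Rabs C + 1)) with (Rabs C * eps) by (field; lra).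
    nra.
Qed.

Lemma rhs_time_continuity s0 x eps : 0 < eps -> exists del, 0 < del /\
  forall s (w : R -> R), Rabs (s - s0) < del -> (forall y, Rabs (w y) <= K) ->
  Rabs (sc_rhs d f z s w x - sc_rhs d f z s0 w x) <= eps.
Proof.
  intros Heps. pose proof (F0_nonneg f F0 HF0). assert (HK0 : 0 <= K) by lra.
  set (e := eps / (6 * (K + 1))).
  assert (He : 0 < e) by (unfold e; apply Rdiv_lt_0_compat; lra).
  destruct (continuity_pt_eps _ s0 (Hdcont (flr (x + z + 1)) s0) e He) as [da [Hda Hxa]].
  destruct (continuity_pt_eps _ s0 (Hdcont (flr (x + z - 1)) s0) e He) as [db [Hdb Hxb]].
  destruct (f_time_continuity s0 (flr (x + z)) e He) as [df [Hdf Hxf]].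
  exists (Rmin da (Rmin db df)). split; [repeat apply Rmin_glb_lt; auto|].
  intros s w Hs Hw.
  pose proof (Rmin_l da (Rmin db df)). pose proof (Rmin_r da (Rmin db df)).
  pose proof (Rmin_l db df). pose proof (Rmin_r db df).
  assert (Hjump : forall y, Rabs (w y - w x) <= 2 * K).
  { intros y. unfold Rminus. eapply Rle_trans; [apply Rabs_triang|]. rewrite Rabs_Ropp.
    pose proof (Hw y). pose proof (Hw x). lra. }
  rewrite rhs_time_increment.
  assert (T1 := Rabs_mult_le _ _ _ _ (Rlt_le _ _ (Hxa s ltac:(lra))) (Hjump (x + 1))).
  assert (T2 := Rabs_mult_le _ _ _ _ (Rlt_le _ _ (Hxb s ltac:(lra))) (Hjump (x - 1))).
  assert (T3 := Rabs_mult_le _ _ _ _ (Hw x) (Hxf s (w x) ltac:(lra) (Hw x))).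
  eapply Rle_trans; [apply Rabs_triang|].
  eapply Rle_trans; [apply Rplus_le_compat_r; apply Rabs_triang|].
  assert (Hsum : e * (2 * K) + e * (2 * K) + K * e <= eps).
  { unfold e. apply (Rmult_le_reg_r (6 * (K + 1))); [lra|].
    replace ((eps / (6 * (K + 1)) * (2 * K) + eps / (6 * (K + 1)) * (2 * K)
              + K * (eps / (6 * (K + 1)))) * (6 * (K + 1))) with (5 * K * eps) by (field; lra).
    nra. }
  lra.
Qed.

Lemma translate_rhs_equicontinuity s0 x eps : 0 < eps -> exists del N, 0 < del /\
  forall n, (N <= n)%nat -> forall s, Rabs (s - s0) < del ->
  Rabs (sc_rhs d f z s (fun y => translate n s y) x
        - sc_rhs d f z s0 (fun y => translate n s0 y) x) <= eps.
Proof.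
  intros Heps.
  pose proof (Bd_nonneg d Bd Hdpos HdB). pose proof (F0_nonneg f F0 HF0).
  pose proof (L_nonneg f L HL). assert (HK0 : 0 <= K) by lra.
  set (Lip := 4 * Bd + F0 + 2 * L * K).
  assert (HLip : 0 <= Lip) by (unfold Lip; assert (0 <= L * K) by (apply Rmult_le_pos; lra); lra).
  assert (HC : 0 <= rhs_bound) by (unfold rhs_bound; fold Lip; apply Rmult_le_pos; lra).
  destruct (rhs_time_continuity s0 x (eps / 2) ltac:(lra)) as [del [Hdel Hcont]].
  destruct (linear_small (Lip * rhs_bound) (eps / 2) ltac:(apply Rmult_le_pos; lra) ltac:(lra))
    as [r [Hr Hsmall]].
  destruct (eventually_large T (Rabs s0 + 1) HT) as [N HN].
  exists (Rmin 1 (Rmin del r)), N. split; [repeat apply Rmin_glb_lt; lra|]. intros n Hn s Hs.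
  pose proof (Rmin_l 1 (Rmin del r)). pose proof (Rmin_r 1 (Rmin del r)).
  pose proof (Rmin_l del r). pose proof (Rmin_r del r).
  specialize (HN n Hn). pose proof (Rle_abs (- s0)) as Hs0. rewrite Rabs_Ropp in Hs0.
  destruct (Rabs_def2 _ _ Hs) as [Hs1 Hs2].
  assert (Hdom : 0 < (s0 - 1) + INR n * T) by lra.
  assert (Hbd : forall t y, Rabs (t - s0) <= 1 -> Rabs (translate n t y) <= K)
    by (intros t y Ht; apply translate_abs_bound; apply Rabs_le_bounds in Ht; lra).
  (* change the time with the state frozen, then the state at the fixed time [s0] *)
  assert (Hfreeze := Hcont s (fun y => translate n s y) ltac:(lra)
                       (fun y => Hbd s y ltac:(lra))).
  assert (Hmove := rhs_lipschitz d f Bd F0 L Hdpos HdB HF0 HL z s0 x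
    (fun y => translate n s y) (fun y => translate n s0 y) K (rhs_bound * Rabs (s - s0)) HK0
    (fun y => Hbd s y ltac:(lra)) (fun y => Hbd s0 y ltac:(rewrite Rminus_diag, Rabs_R0; lra))
    (fun y => translate_lipschitz n (s0 - 1) (s0 + 1) y Hdom s s0 ltac:(lra) ltac:(lra))).
  fold Lip in Hmove. rewrite <- Rmult_assoc in Hmove.
  assert (Hsr : 0 <= Rabs (s - s0) < r) by (split; [apply Rabs_pos|lra]).
  specialize (Hsmall (Rabs (s - s0)) Hsr).
  replace (sc_rhs d f z s (fun y => translate n s y) x - sc_rhs d f z s0 (fun y => translate n s0 y) x)
    with ((sc_rhs d f z s (fun y => translate n s y) x - sc_rhs d f z s0 (fun y => translate n s y) x)
        + (sc_rhs d f z s0 (fun y => translate n s y) x - sc_rhs d f z s0 (fun y => translate n s0 y) x))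
    by ring.
  eapply Rle_trans; [apply Rabs_triang|]. lra.
Qed.

Lemma limit_deriv s0 x : derivable_pt_lim (fun s => V s x) s0 (sc_rhs d f z s0 (fun y => V s0 y) x).
Proof.
  apply (derivative_of_limit (fun n s => translate n s x)
           (fun n s => sc_rhs d f z s (fun y => translate n s y) x)).
  - intros s. apply HV.
  - apply rhs_convergence.
  - intros r. destruct (eventually_large T (Rabs s0 + r + 1) HT) as [N HN].
    exists N. intros n Hn s Hs. apply translate_deriv.
    specialize (HN n Hn). pose proof (Rle_abs (- s0)) as Hs0. rewrite Rabs_Ropp in Hs0.
    apply Rabs_le_bounds in Hs. lra.
  - intros eps Heps. apply translate_rhs_equicontinuity, Heps.
Qed.

Lemma limit_bounds t x : 0 <= V t x <= K.
Proof.
  destruct (eventually_large T (Rabs t) HT) as [N HN].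
  apply (CV_eventual_bounds (fun n => translate n t x) (V t x) 0 K N (HV t x)).
  intros n Hn. apply translate_bounds. specialize (HN n Hn).
  pose proof (Rle_abs (- t)) as Ht. rewrite Rabs_Ropp in Ht. lra.
Qed.

(* By uniqueness, the limit is the solution starting from its own trace at
   time 0. *)
Lemma limit_is_solution t x : 0 <= t -> V t x = U t x (fun y => V 0 y) z.
Proof.
  intros Ht.
  assert (Hb : exists B, forall y, Rabs (V 0 y) <= B).
  { exists K. intros y. destruct (limit_bounds 0 y). rewrite Rabs_right; lra. }
  destruct (sol_map_solution d f U (fun y => V 0 y) z HU Hb) as [Hs H0].
  apply (uniqueness d f Bd F0 L Hdpos HdB HF0 HL z V (fun t x => U t x (fun y => V 0 y) z));
    [|exact Hs|intros y; rewrite H0; reflexivity|exact Ht].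
  split; [intros; apply limit_deriv|split].
  - intros y. eapply derivable_rcont. apply limit_deriv.
  - intros tau. exists K. intros t' y _. destruct (limit_bounds t' y). rewrite Rabs_right; lra.
Qed.
End LimitOfTranslates.

Lemma translates_limit_is_entire_solution (T : R) (J : Z) (d : R -> Z -> R)
  (f fu : R -> Z -> R -> R) (M0 : R) (U : R -> R -> (R -> R) -> R -> R)
  (z c K0 : R) (dat : nat -> R -> R) (V : R -> R -> R) :
  0 < T -> (0 < J)%Z -> hyp_d T J d -> hyp_H0 T J M0 f fu -> is_sol_map d f U ->
  (forall n y, 0 <= dat n y <= K0) ->
  (forall t x, Un_cv (fun n => U (t + INR n * T) (x + c * INR n * T) (dat n) (z - c * INR n * T))
                     (V t x)) ->
  (forall t x, 0 <= t -> V t x = U t x (fun y => V 0 y) z) /\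
  (forall t x, derivable_pt_lim (fun s => V s x) t (sc_rhs d f z t (fun y => V t y) x)).
Proof.
  intros HT HJ Hd Hf HU Hdat HV.
  destruct (f_zero_bounded T J M0 f fu HT HJ Hf) as [F0 HF0].
  destruct Hd as [[Bd HdB] [[delta [Hdelta Hdlow]] [Hdcont [HdT _]]]].
  assert (Hdpos : forall t j, 0 <= d t j) by (intros t j; specialize (Hdlow t j); lra).
  destruct Hf as [[alpha [[Halpha _] Hhol]] [[L HL] [_ [_ [Hneg [[HM0p HM0] [_ [_ [HfT _]]]]]]]]].
  (* any level above both [M0] and the data is preserved by the flow *)
  set (K := Rmax M0 K0).
  assert (Hdat' : forall n y, 0 <= dat n y <= K)
    by (intros n y; specialize (Hdat n y); pose proof (Rmax_r M0 K0); unfold K; lra).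
  split.
  - exact (limit_is_solution T d f Bd F0 L M0 alpha U z c K dat V HT Hdpos HdB Hdcont HdT
             HF0 HL Hneg HM0 HM0p HfT Halpha Hhol HU (Rmax_l M0 K0) Hdat' HV).
  - exact (limit_deriv T d f Bd F0 L M0 alpha U z c K dat V HT Hdpos HdB Hdcont HdT
             HF0 HL Hneg HM0 HM0p HfT Halpha Hhol HU (Rmax_l M0 K0) Hdat' HV).
Qed.

Theorem lemma3p2
  (T : R) (J : Z) (d : R -> Z -> R) (f fu : R -> Z -> R -> R) (M0 : R)
  (uplus : R -> Z -> R) (lam : R -> R) (psi : R -> R -> Z -> R)
  (cstar mustar c mu mu' dd d1 b N M : R)
  (U : R -> R -> (R -> R) -> R -> R) (uP uM : R -> R -> R -> R)
  (HT : 0 < T) (HJ : (0 < J)%Z)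
  (Hd : hyp_d T J d) (Hf : hyp_H0 T J M0 f fu)
  (Hup : is_uplus d f uplus)
  (Heig : is_eigen T J d f lam psi)
  (Hmustar : 0 < mustar) (Hcstar : cstar = lam mustar / mustar)
  (Hcmin : forall m, 0 < m -> cstar <= lam m / m)
  (Hc : cstar < c)
  (Hmu : 0 < mu /\ mu < mu' /\ mu' < Rmin (2 * mu) mustar)
  (Hcmu : c = lam mu / mu) (Hmu' : lam mu / mu > lam mu' / mu' /\ lam mu' / mu' > cstar)
  (Hdd : 0 < dd <= 2) (Hd1 : 0 < d1) (Hb : 0 < b) (HNM : N <= M)
  (HM : forall t x z, N <= x - c * t <= M ->
          b * ext (psi 0) t (x + z) <= vlow psi c mu mu' dd d1 t x z)
  (HU : is_sol_map d f U)
  (HuP : forall t x z, Un_cv (fun n => u_sup U psi uplus T c mu mu' dd d1 n t x z) (uP t x z))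
  (HuM : forall t x z, Un_cv (fun n => u_sub U psi T c mu mu' dd d1 b M n t x z) (uM t x z)) :
  forall z,
    (forall t x, 0 <= t -> uP t x z = U t x (fun y => uP 0 y z) z) /\
    (forall t x, 0 <= t -> uM t x z = U t x (fun y => uM 0 y z) z) /\
    (forall t x, derivable_pt_lim (fun s => uP s x z) t (sc_rhs d f z t (fun y => uP t y z) x)) /\
    (forall t x, derivable_pt_lim (fun s => uM s x z) t (sc_rhs d f z t (fun y => uM t y z) x)).
Proof.
  intros z.
  destruct (uupper_bounded T J d f uplus lam psi c mu mu' dd d1 Hup Heig ltac:(lra) Hd1)
    as [Ku HKu].
  destruct (ulow_bounded T J d f lam psi c mu mu' dd d1 b N M HJ Heig ltac:(lra) ltac:(lra) Hd1 Hb HNM HM)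
    as [Kl HKl].
  destruct (translates_limit_is_entire_solution T J d f fu M0 U z c Ku
    (fun n y => uupper psi uplus c mu mu' dd d1 0 y (z - c * INR n * T)) (fun t x => uP t x z)
    HT HJ Hd Hf HU (fun n y => HKu y _) (fun t x => HuP t x z)) as [HsolP HderP].
  destruct (translates_limit_is_entire_solution T J d f fu M0 U z c Kl
    (fun n y => ulow psi c mu mu' dd d1 b M 0 y (z - c * INR n * T)) (fun t x => uM t x z)
    HT HJ Hd Hf HU (fun n y => HKl y _) (fun t x => HuM t x z)) as [HsolM HderM].
  repeat split; assumption.
Qed.
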